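(* Let $G=(A,B;E)$ be a bipartite graph with bipartition $\{A,B\}$, let $\bar G$ be its complement, and let $T,T'$ be $(p,p)$-bicliques of $G$. There is a TJ-move from $T$ to $T'$ in $G$ (i.e., $|T\setminus T'|=|T'\setminus T|=1$) if and only if there is a CS1-move from $T$ to $T'$ in $\bar G$.
   Context: A vertex set $S$ is a $(p,q)$-biclique of $G$ if $G[S]$ is isomorphic to $K_{p,q}$. For a graph $F$ and $S\subseteq V(F)$, $\mathsf{cc}_F(S)$ is the set of vertex sets of connected components of $F[S]$. A CS1-move from $T$ to $T'$ in $\bar G$ (where $T,T'$ have the same multiset of component sizes) means: $|\mathsf{cc}_{\bar G}(T)\setminus\mathsf{cc}_{\bar G}(T')|=|\mathsf{cc}_{\bar G}(T')\setminus\mathsf{cc}_{\bar G}(T)|=1$, and the unique elements $X\in\mathsf{cc}_{\bar G}(T)\setminus\mathsf{cc}_{\bar G}(T')$ and $X'\in\mathsf{cc}_{\bar G}(T')\setminus\mathsf{cc}_{\bar G}(T)$ satisfy that $\bar G[X\cup X']$ is connected and $|X\setminus X'|=|X'\setminus X|=1$. The complement $\bar G$ has the same vertex set, with two distinct vertices adjacent iff they are non-adjacent in $G$. *)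

From mathcomp Require Import all_boot.
Set Implicit Arguments. Unset Strict Implicit. Unset Printing Implicit Defensive.

Section Defs.
Variable V : finType.

Definition simple_graph (e : rel V) := symmetric e /\ irreflexive e.

Definition bipartition (e : rel V) (A B : {set V}) :=
  [/\ A :&: B = set0, A :|: B = setT &
      forall x y, e x y -> (x \in A /\ y \in B) \/ (x \in B /\ y \in A)].

Definition compl (e : rel V) : rel V := fun x y => (x != y) && ~~ e x y.

Definition Kpq_adj (p q : nat) (u v : 'I_p + 'I_q) : bool :=
  match u, v with
  | inl _, inr _ => true
  | inr _, inl _ => true
  | _, _ => false
  end.

Definition biclique (e : rel V) (p q : nat) (S : {set V}) :=
  exists g : 'I_p + 'I_q -> V,
    [/\ injective g, g @: setT = S &
        forall u v, e (g u) (g v) = Kpq_adj u v].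

Definition induced_rel (F : rel V) (S : {set V}) : rel V :=
  fun x y => [&& F x y, x \in S & y \in S].

Definition comp_of (F : rel V) (S : {set V}) (x : V) : {set V} :=
  [set y in S | connect (induced_rel F S) x y].

Definition cc (F : rel V) (S : {set V}) : {set {set V}} :=
  [set comp_of F S x | x in S].

Definition connected_in (F : rel V) (X : {set V}) :=
  forall x y, x \in X -> y \in X -> connect (induced_rel F X) x y.

Definition comp_sizes (F : rel V) (S : {set V}) : seq nat :=
  [seq #|C| | C : {set V} in cc F S].

Definition TJ_move (T T' : {set V}) :=
  #|T :\: T'| = 1 /\ #|T' :\: T| = 1.

Definition CS1_move (F : rel V) (T T' : {set V}) :=
  [/\ perm_eq (comp_sizes F T) (comp_sizes F T'),
      #|cc F T :\: cc F T'| = 1,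
      #|cc F T' :\: cc F T| = 1 &
      forall X X', X \in cc F T :\: cc F T' -> X' \in cc F T' :\: cc F T ->
        [/\ connected_in F (X :|: X'), #|X :\: X'| = 1 & #|X' :\: X| = 1]].
End Defs.

From mathcomp Require Import all_boot zify.
Set Implicit Arguments. Unset Strict Implicit. Unset Printing Implicit Defensive.

(* In a bipartite graph with sides A and B, a (p,p)-biclique T with p > 0 has
   both halves T∩A and T∩B of size p, and all edges of G[T] run between them.
   In the complement each half is a clique and no edge joins the two halves,
   so cc(T) = {T∩A, T∩B}.  Writing |T \ T'| = |T∩A \ T'∩A| + |T∩B \ T'∩B|,
   both a TJ-move and a CS1-move amount to: one half is kept and the other is
   replaced by a set of the same size sharing all but one vertex with it.
   For p = 0 both T and T' are empty and neither move exists. *)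

Lemma card_setD_sym (T : finType) (X Y : {set T}) :
  #|X| = #|Y| -> #|X :\: Y| = #|Y :\: X|.
Proof. by move=> cardXY; rewrite !cardsD setIC cardXY. Qed.

Lemma cards_setD_eq0 (T : finType) (X Y : {set T}) :
  #|X| = #|Y| -> (#|X :\: Y| == 0) = (X == Y).
Proof. by move=> cardXY; rewrite cards_eq0 setD_eq0 eqEcard cardXY leqnn andbT. Qed.

Lemma setD_pairl (T : finType) (x x' y : T) :
  x != x' -> x != y -> [set x; y] :\: [set x'; y] = [set x].
Proof.
move=> xx' xy; apply/setP => z; rewrite !inE.
case: (eqVneq z x) => [->|_] /=; first by rewrite (negbTE xx') (negbTE xy).
by case: (z == y); rewrite ?orbT ?andbF.
Qed.

Section Graph.
Variables (V : finType) (e : rel V).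

Lemma biclique0 (T : {set V}) : biclique e 0 0 T -> T = set0.
Proof.
case=> g [_ <- _]; apply/setP => x; rewrite inE.
by apply/imsetP => -[[[? ?]|[? ?]] _ _].
Qed.

Lemma card_biclique p q (T : {set V}) : biclique e p q T -> #|T| = p + q.
Proof. by case=> g [g_inj <- _]; rewrite card_imset // cardsT card_sum !card_ord. Qed.

Lemma connected_in_compl (X : {set V}) :
  {in X &, forall x y, ~~ e x y} -> connected_in (compl e) X.
Proof.
move=> noedge x y xX yX; have [->|xy] := eqVneq x y; first exact: connect0.
by apply: connect1; rewrite /induced_rel /compl xy xX yX noedge.
Qed.

Lemma comp_sizes_pair (F : rel V) (S X Y : {set V}) n :
  cc F S = [set X; Y] -> X != Y -> #|X| = n -> #|Y| = n ->
  comp_sizes F S = nseq 2 n.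
Proof.
move=> ccS XY cardX cardY.
have <- : size (comp_sizes F S) = 2 by rewrite size_image ccS cards2 XY.
apply/all_pred1P/allP => m /imageP [C]; rewrite ccS !inE.
by case/orP => /eqP -> ->; rewrite /= ?cardX ?cardY.
Qed.

Lemma CS1_move_swap (F : rel V) (T T' X X' Y : {set V}) :
  cc F T = [set X; Y] -> cc F T' = [set X'; Y] ->
  X != X' -> X != Y -> X' != Y ->
  perm_eq (comp_sizes F T) (comp_sizes F T') -> connected_in F (X :|: X') ->
  CS1_move F T T' <-> #|X :\: X'| = 1 /\ #|X' :\: X| = 1.
Proof.
move=> ccT ccT' XX' XY X'Y sizes connXX'; rewrite /CS1_move.
have -> : cc F T :\: cc F T' = [set X] by rewrite ccT ccT' setD_pairl.
have -> : cc F T' :\: cc F T = [set X'] by rewrite ccT ccT' setD_pairl // eq_sym.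
rewrite !cards1; split=> [[_ _ _ /(_ X X')] | [cardXX' cardX'X]].
  by rewrite !set11 => /(_ isT isT) [].
by split=> // Z Z' /set1P -> /set1P ->.
Qed.

Lemma CS1_move_both_changed (F : rel V) (T T' X X' Y Y' : {set V}) :
  cc F T = [set X; Y] -> cc F T' = [set X'; Y'] -> X != Y ->
  X != X' -> X != Y' -> Y != X' -> Y != Y' -> ~ CS1_move F T T'.
Proof.
move=> ccT ccT' XY XX' XY' YX' YY' [_ cardD _ _].
have sub : [set X; Y] \subset cc F T :\: cc F T'.
  rewrite ccT ccT'; apply/subsetP => C; rewrite !inE => /orP [] /eqP ->;
  by rewrite eqxx ?orbT /= ?(negbTE XX') ?(negbTE XY') ?(negbTE YX') ?(negbTE YY').
by have := subset_leq_card sub; rewrite cardD cards2 XY.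
Qed.

End Graph.

Section Bipartition.
Variables (V : finType) (e : rel V) (A B : {set V}).
Hypothesis HAB : bipartition e A B.

Lemma bipartition_inB x : (x \in B) = (x \notin A).
Proof.
case: HAB => AB0 ABT _.
have : x \in A :|: B by rewrite ABT inE.
have : x \notin A :&: B by rewrite AB0 inE.
by rewrite !inE; case: (x \in A); case: (x \in B).
Qed.

Lemma bipartition_edge x y : e x y -> (x \in A) != (y \in A).
Proof.
case: HAB => _ _ sides /sides; rewrite !bipartition_inB.
by case=> [[-> /negbTE ->] | [/negbTE -> ->]].
Qed.

Lemma bipartition_setD (S S' : {set V}) :
  #|S :\: S'| = #|S :&: A :\: S' :&: A| + #|S :&: B :\: S' :&: B|.
Proof.
rewrite -(cardsID A (S :\: S')); congr (_ + _); apply: eq_card => x;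
by rewrite !inE ?bipartition_inB; case: (x \in A); case: (x \in S); case: (x \in S').
Qed.

(* Two vertices in the same half of K_{p,p} have a common neighbour,
   hence lie on the same side. *)
Lemma Kpq_embedding_sides p (g : 'I_p + 'I_p -> V) :
  0 < p -> (forall u v, e (g u) (g v) = Kpq_adj u v) ->
  forall u v, ((g u \in A) != (g v \in A)) = Kpq_adj u v.
Proof.
move=> p_gt0 g_adj; set o := Ordinal p_gt0.
have adj_sides u v : Kpq_adj u v -> (g u \in A) != (g v \in A).
  by move=> uv; apply: bipartition_edge; rewrite g_adj.
case=> [i|i] [j|j] /=; try exact: adj_sides.
  have := adj_sides (inl i) (inr o) isT; have := adj_sides (inl j) (inr o) isT.
  by case: (g (inl i) \in A); case: (g (inl j) \in A); case: (g (inr o) \in A).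
have := adj_sides (inl o) (inr i) isT; have := adj_sides (inl o) (inr j) isT.
by case: (g (inr i) \in A); case: (g (inr j) \in A); case: (g (inl o) \in A).
Qed.

Lemma biclique_edgeE p (T : {set V}) : biclique e p p T -> 0 < p ->
  {in T &, forall x y, e x y = ((x \in A) != (y \in A))}.
Proof.
case=> g [_ <- g_adj] p_gt0 _ _ /imsetP [u _ ->] /imsetP [v _ ->].
by rewrite g_adj Kpq_embedding_sides.
Qed.

Lemma biclique_card_setI_ge p (T : {set V}) : biclique e p p T -> 0 < p ->
  p <= #|T :&: A|.
Proof.
case=> g [g_inj gT g_adj] p_gt0; set o := Ordinal p_gt0.
pose f (i : 'I_p) := g (if g (inl o) \in A then inl i else inr i).
have f_inj : injective f.
  by move=> i j; rewrite /f; case: (g (inl o) \in A) => /g_inj [].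
suff sub : f @: [set: 'I_p] \subset T :&: A.
  by have := subset_leq_card sub; rewrite card_imset // cardsT card_ord.
apply/subsetP => _ /imsetP [i _ ->].
rewrite inE /f -gT imset_f //=.
have := Kpq_embedding_sides p_gt0 g_adj (inl i) (inl o).
have := Kpq_embedding_sides p_gt0 g_adj (inr i) (inl o).
by case: (g (inl o) \in A) => /=; case: (g (inl i) \in A); case: (g (inr i) \in A).
Qed.

Lemma connected_in_compl_side (C : {set V}) b :
  C \subset [set x | (x \in A) == b] -> connected_in (compl e) C.
Proof.
move=> /subsetP sub; apply: connected_in_compl => x y /sub + /sub.
rewrite !inE => /eqP xb /eqP yb; apply/negP => /bipartition_edge.
by rewrite xb yb eqxx.
Qed.

Lemma comp_of_compl_sides (S : {set V}) x :
  {in S &, forall x y, e x y = ((x \in A) != (y \in A))} -> x \in S ->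
  comp_of (compl e) S x = if x \in A then S :&: A else S :&: B.
Proof.
move=> S_edge xS.
have -> : (if x \in A then S :&: A else S :&: B) = [set y in S | (y \in A) == (x \in A)].
  apply/setP => y; case: (x \in A); rewrite !inE ?bipartition_inB;
  by case: (y \in A); rewrite ?andbT ?andbF.
apply/setP => y; rewrite !inE; case yS: (y \in S) => //=; apply/idP/idP.
  (* the side of x is closed under the edges of the complement inside S *)
  move=> /(closed_connect (a := mem A)) <- // u v /and3P [/andP [_ uv] uS vS].
  by move: uv; rewrite S_edge //; case: (u \in A); case: (v \in A).
move=> /eqP same_side; have [->|xy] := eqVneq x y; first exact: connect0.
by apply: connect1; rewrite /induced_rel /compl xy xS yS S_edge // same_side eqxx.
Qed.

End Bipartition.

Lemma bipartition_sym (V : finType) (e : rel V) (A B : {set V}) :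
  bipartition e A B -> bipartition e B A.
Proof.
by case=> AB0 ABT sides; split=> [|| x y /sides []]; rewrite 1?setIC 1?setUC //; auto.
Qed.

Lemma biclique_card_setI (V : finType) (e : rel V) (A B : {set V}) p (T : {set V}) :
  bipartition e A B -> biclique e p p T -> 0 < p ->
  #|T :&: A| = p /\ #|T :&: B| = p.
Proof.
move=> HAB HT p_gt0.
have geA := biclique_card_setI_ge HAB HT p_gt0.
have geB := biclique_card_setI_ge (bipartition_sym HAB) HT p_gt0.
have : #|T :&: A| + #|T :&: B| = p + p.
  rewrite -(card_biclique HT) -(cardsID A T); congr (_ + _); apply: eq_card => x.
  by rewrite !inE (bipartition_inB HAB) andbC.
lia.
Qed.

Lemma biclique_setI_neq (V : finType) (e : rel V) (A B : {set V}) p (S S' : {set V}) :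
  bipartition e A B -> biclique e p p S -> 0 < p -> S :&: A != S' :&: B.
Proof.
move=> HAB HS p_gt0; have [x] : exists x, x \in S :&: A.
  by apply/set0Pn; rewrite -card_gt0 (biclique_card_setI HAB HS p_gt0).1.
move=> xSA; have xA : x \in A by case/setIP: xSA.
by apply: contraTneq xSA => ->; rewrite !inE (bipartition_inB HAB) xA andbF.
Qed.

Lemma cc_compl_biclique (V : finType) (e : rel V) (A B : {set V}) p (T : {set V}) :
  bipartition e A B -> biclique e p p T -> 0 < p ->
  cc (compl e) T = [set T :&: A; T :&: B].
Proof.
move=> HAB HT p_gt0; have [cardA cardB] := biclique_card_setI HAB HT p_gt0.
have comp := comp_of_compl_sides HAB (biclique_edgeE HAB HT p_gt0).
apply/setP => C; rewrite !inE; apply/imsetP/orP => [[x xT ->] | ].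
  by rewrite comp //; case: (x \in A); [left | right].
have [/set0Pn [a aTA] /set0Pn [b bTB]] : T :&: A != set0 /\ T :&: B != set0.
  by rewrite -!card_gt0 cardA cardB.
move: aTA bTB; rewrite !inE (bipartition_inB HAB).
move=> /andP [aT aA] /andP [bT /negbTE bA].
by case=> /eqP ->; [exists a | exists b]; rewrite // comp ?aA ?bA.
Qed.

Section BicliquePair.
Variables (V : finType) (e : rel V) (A B : {set V}) (p : nat) (T T' : {set V}).
Hypotheses (HAB : bipartition e A B) (p_gt0 : 0 < p).
Hypotheses (HT : biclique e p p T) (HT' : biclique e p p T').

Lemma TJ_move_sidesE :
  TJ_move T T' <-> #|T :&: A :\: T' :&: A| + #|T :&: B :\: T' :&: B| = 1.
Proof.
have [cardA cardB] := biclique_card_setI HAB HT p_gt0.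
have [cardA' cardB'] := biclique_card_setI HAB HT' p_gt0.
rewrite /TJ_move (bipartition_setD HAB T) (bipartition_setD HAB T').
rewrite (card_setD_sym (X := T' :&: A)) ?cardA ?cardA' //.
by rewrite (card_setD_sym (X := T' :&: B)) ?cardB ?cardB' //; split=> [[]|].
Qed.

Lemma CS1_move_sidesE :
  CS1_move (compl e) T T' <-> #|T :&: A :\: T' :&: A| + #|T :&: B :\: T' :&: B| = 1.
Proof.
have [cardA cardB] := biclique_card_setI HAB HT p_gt0.
have [cardA' cardB'] := biclique_card_setI HAB HT' p_gt0.
have ccT := cc_compl_biclique HAB HT p_gt0; have ccT' := cc_compl_biclique HAB HT' p_gt0.
have nTAB S' := biclique_setI_neq S' HAB HT p_gt0.
have nT'AB S' := biclique_setI_neq S' HAB HT' p_gt0.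
have nTBA S' := biclique_setI_neq S' (bipartition_sym HAB) HT p_gt0.
have nT'BA S' := biclique_setI_neq S' (bipartition_sym HAB) HT' p_gt0.
have sizes : perm_eq (comp_sizes (compl e) T) (comp_sizes (compl e) T').
  by rewrite (comp_sizes_pair ccT (nTAB T) cardA cardB)
             (comp_sizes_pair ccT' (nT'AB T') cardA' cardB').
case: (eqVneq (T :&: A) (T' :&: A)) => [eqA|neqA];
  case: (eqVneq (T :&: B) (T' :&: B)) => [eqB|neqB].
- have ccTT' : cc (compl e) T = cc (compl e) T' by rewrite ccT ccT' eqA eqB.
  by rewrite /CS1_move ccTT' eqA eqB !setDv !cards0; split=> [[]|].
- rewrite (@CS1_move_swap _ _ T T' (T :&: B) (T' :&: B) (T :&: A)) ?nTBA ?nT'BA //.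
  + rewrite eqA setDv cards0 add0n (card_setD_sym (X := T' :&: B)) ?cardB ?cardB' //.
    by split=> [[]|].
  + by rewrite setUC.
  + by rewrite ccT' eqA setUC.
  + apply: (connected_in_compl_side HAB (b := false)); apply/subsetP => x.
    by rewrite !inE (bipartition_inB HAB) => /orP [] /andP [_ /negbTE ->].
- rewrite (@CS1_move_swap _ _ T T' (T :&: A) (T' :&: A) (T :&: B)) ?nTAB ?nT'AB //.
  + rewrite eqB setDv cards0 addn0 (card_setD_sym (X := T' :&: A)) ?cardA ?cardA' //.
    by split=> [[]|].
  + by rewrite ccT' eqB.
  + apply: (connected_in_compl_side HAB (b := true)); apply/subsetP => x.
    by rewrite !inE => /orP [] /andP [_ ->].
- split=> [CS1 | ].
    by case: (CS1_move_both_changed ccT ccT' (nTAB _) neqA (nTAB _) (nTBA _) neqB CS1).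
  have := cards_setD_eq0 (etrans cardA (esym cardA')).
  have := cards_setD_eq0 (etrans cardB (esym cardB')).
  rewrite (negbTE neqA) (negbTE neqB); lia.
Qed.

End BicliquePair.

Theorem lemma6 (V : finType) (e : rel V) (He : simple_graph e)
  (A B : {set V}) (HAB : bipartition e A B) (p : nat) (T T' : {set V})
  (HT : biclique e p p T) (HT' : biclique e p p T') :
  TJ_move T T' <-> CS1_move (compl e) T T'.
Proof.
have [p0 | p_gt0] := posnP p.
  move: HT HT'; rewrite p0 => /biclique0 -> /biclique0 ->.
  by rewrite /TJ_move /CS1_move /cc imset0 !setDv !cards0; split=> [[]|[]].
by rewrite (TJ_move_sidesE HAB p_gt0 HT HT') (CS1_move_sidesE HAB p_gt0 HT HT').
Qed.
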